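(* For each finite set $\tau\subseteq\mathbb{S}$ and each $s\in\mathbb{S}$ there is an MSO sentence $\phi$ over $\mathbb{R}_{\mathrm{tree}}(\mathbb{B}^\tau_{\mathrm{parse}})$ such that for every tree $T\in\mathcal{T}(\mathbb{B}^\tau_{\mathrm{parse}})$: $\|T\|\models\phi$ iff the graph $\mathbf{val}(T)$ has an $s$-source.
   Context: Graphs over a countably infinite set $\mathbb{S}$ of source labels and finite set $\mathbb{A}$ of edge labels: isomorphism classes of finite $\mathbb{A}$-labelled hypergraphs with an injective map $\xi$ from a finite sort into the vertices ($\xi(s)$ is the $s$-source). HR operations: $\mathbf{0}_\sigma$ (one $s$-source for each $s\in\sigma$), $\mathbf{a}_{(s_1,\ldots,s_{\#a})}$ (one $a$-edge on $s_i$-sources), $\mathsf{restrict}_\sigma$ (forget source labels outside $\sigma$; sort $\sigma'\mapsto\sigma\cap\sigma'$), $\mathsf{rename}_\alpha$ ($\alpha$ finite permutation of $\mathbb{S}$; source map $\xi\circ\alpha$), $\parallel$ (disjoint union fusing equally-labelled sources). Trees: with root label $\mathfrak{r}$, trees over an alphabet $\mathbb{B}$ of unary/binary labels are values of ground terms over $\mathbf{c}$ (root with unary $c$-edge), $\mathsf{append}_b$ (new root with a $b$-edge to the old root), $\parallel$ (fuse roots); $\mathcal{T}(\mathbb{B})$ is their set; a tree $T$ is encoded by $\|T\|$ with universe nodes $\cup$ edges over $\mathbb{R}_{\mathrm{tree}}(\mathbb{B})=\{r_b\}_{b\in\mathbb{B}}\cup\{r_\mathfrak{r}\}$ ($r_b(e,\bar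 n)$: $e$ is a $b$-edge on $\bar n$; $r_\mathfrak{r}$: the root). $\mathbb{B}^\tau_{\mathrm{parse}}$: unary labels $\underline{\mathbf{0}}_{\sigma}$ ($\sigma\subseteq\tau$), $\underline{\mathbf{a}}_{(s_1..)}$ ($s_i\in\tau$), binary labels $\underline{\mathsf{restrict}}_{\sigma}$ ($\sigma\subseteq\tau$), $\underline{\mathsf{rename}}_\alpha$ ($\alpha$ fixing everything outside $\tau$). $\mathbf{val}(T)$ is the value of the HR term obtained from a tree term for $T$ by replacing $\underline{\mathbf{c}}$ by $\mathbf{c}$ and $\mathsf{append}_{\underline b}$ by the HR operation $b$. *)

From mathcomp Require Import all_boot.
From mathcomp Require Import finmap.

Set Implicit Arguments.
Unset Strict Implicit.
Unset Printing Implicit Defensive.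



(* Source labels S := nat (countably infinite).
   Edge labels: a finite type A with an arity function ar : A -> nat. *)

(* HR graphs (concrete representatives; vertices are named by nats).   *)
(*   hV : the vertices, hE : the edges (label, attachment sequence),    *)
(*   hS : the source map as a list of pairs (source label, vertex).    *)
Record hgraph (A : Type) := HG {
  hV : seq nat;
  hE : seq (A * seq nat);
  hS : seq (nat * nat) }.

Definition sort_of A (g : hgraph A) : seq nat := [seq p.1 | p <- hS g].

Definition has_source A (g : hgraph A) (s : nat) : Prop := s \in sort_of g.

(* 0_sigma : one s-source for each s in sigma, nothing else *)
Definition hr_zero A (sigma : {fset nat}) : hgraph A :=
  let l := enum_fset sigma in
  HG (iota 0 (size l)) [::] (zip l (iota 0 (size l))).

(* a_(s_1,...,s_n) : one a-edge on the s_i-sources *)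
Definition hr_edge A (a : A) (ss : seq nat) : hgraph A :=
  let l := undup ss in
  HG (iota 0 (size l)) [:: (a, [seq index s l | s <- ss])]
     (zip l (iota 0 (size l))).

Definition hr_restrict A (sigma : {fset nat}) (g : hgraph A) : hgraph A :=
  HG (hV g) (hE g) [seq p <- hS g | p.1 \in sigma].

(* rename_alpha (alpha a permutation with inverse alphai): new source map
   xi o alpha, i.e. s is a source of the result at xi (alpha s). *)
Definition hr_rename A (alpha alphai : nat -> nat) (g : hgraph A) : hgraph A :=
  HG (hV g) (hE g) [seq (alphai p.1, p.2) | p <- hS g].

(* parallel composition: disjoint union fusing equally labelled sources *)
Definition src_vertex A (g : hgraph A) (s : nat) : option nat :=
  ohead [seq p.2 | p <- hS g & p.1 == s].

Definition hr_par A (g h : hgraph A) : hgraph A :=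
  let N := (\max_(v <- hV g) v).+1 in
  let f v :=
    match ohead [seq p.1 | p <- hS h & p.2 == v] with
    | Some s => match src_vertex g s with Some w => w | None => N + v end
    | None => N + v
    end in
  HG (undup (hV g ++ [seq f v | v <- hV h]))
     (hE g ++ [seq (e.1, [seq f v | v <- e.2]) | e <- hE h])
     (hS g ++ [seq (p.1, f p.2) | p <- hS h & p.1 \notin sort_of g]).

Inductive plab (A : Type) :=
| PZero of {fset nat}
| PEdge of A & seq nat
| PRestrict of {fset nat}
| PRename of (nat -> nat) & (nat -> nat).   (* binary : underline rename_alpha,
                                               given with its inverse *)

Definition plab_unary A (b : plab A) : bool :=
  match b with PZero _ | PEdge _ _ => true | _ => false end.

(* number of nodes an r_b-edge is attached to (1 for unary, 2 for binary) *)
Definition plab_arity A (b : plab A) : nat := if plab_unary b then 1 else 2.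

Definition in_Bparse (A : Type) (ar : A -> nat) (tau : {fset nat}) (b : plab A)
  : Prop :=
  match b with
  | PZero sigma => (sigma `<=` tau)%fset
  | PEdge a ss => size ss = ar a /\ all (fun s => s \in tau) ss
  | PRestrict sigma => (sigma `<=` tau)%fset
  | PRename alpha alphai =>
      cancel alpha alphai /\ cancel alphai alpha /\
      (forall x, x \notin tau -> alpha x = x)
  end.

(* Trees: ground terms over c, append_b, ||                            *)
Inductive tterm (A : Type) :=
| TLeaf of plab A                  (* c : root with a unary c-edge *)
| TApp of plab A & tterm A
| TPar of tterm A & tterm A.       (* fuse roots *)

Fixpoint in_TB A (ar : A -> nat) (tau : {fset nat}) (t : tterm A) : Prop :=
  match t with
  | TLeaf c => plab_unary c /\ in_Bparse ar tau c
  | TApp b t' => ~~ plab_unary b /\ in_Bparse ar tau b /\ in_TB ar tau t'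
  | TPar t1 t2 => in_TB ar tau t1 /\ in_TB ar tau t2
  end.

(* concrete tree: (number of nodes, root, edges (label, attached nodes)).
   Nodes are 0 .. n-1. For append_b the new b-edge is on (new root, old root). *)
Fixpoint build A (t : tterm A) : nat * nat * seq (plab A * seq nat) :=
  match t with
  | TLeaf c => (1, 0, [:: (c, [:: 0])])
  | TApp b t' =>
      let: (n, r, E) := build t' in (n.+1, n, rcons E (b, [:: n; r]))
  | TPar t1 t2 =>
      let: (n1, r1, E1) := build t1 in
      let: (n2, r2, E2) := build t2 in
      let f v := if v == r2 then r1 else if v < r2 then n1 + v else n1 + v - 1 in
      (n1 + n2 - 1, r1, E1 ++ [seq (e.1, [seq f v | v <- e.2]) | e <- E2])
  end.

(* relational structures over R_tree(B): universe {0,...,usize-1},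
   relations r_b (b a label) and r_root *)
Record rstruct (A : Type) := RS {
  usize : nat;
  urel : plab A -> seq nat -> Prop;
  uroot : nat -> Prop }.

(* ||T|| : universe = nodes (0..n-1) and edges (n..n+|E|-1);
   r_b(e, nbar) iff e is a b-edge on nbar; r_root(x) iff x is the root *)
Definition enc A (t : tterm A) : rstruct A :=
  let: (n, r, E) := build t in
  RS (n + size E)
     (fun b xs => exists i, [/\ i < size E,
                  (nth (b, [::]) E i).1 = b &
                  xs = (n + i) :: (nth (b, [::]) E i).2])
     (fun x => x = r).

Inductive mso (A : Type) :=
| MRel of plab A & nat & seq nat
| MRoot of nat
| MEq of nat & nat
| MIn of nat & nat                 (* x in X *)
| MNot of mso A
| MAnd of mso A & mso A
| MOr of mso A & mso A
| MEx1 of nat & mso A              (* exists first-order x *)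
| MEx2 of nat & mso A.             (* exists set X *)

Fixpoint fv1 A (f : mso A) : seq nat :=
  match f with
  | MRel _ x ys => x :: ys
  | MRoot x => [:: x]
  | MEq x y => [:: x; y]
  | MIn x _ => [:: x]
  | MNot g => fv1 g
  | MAnd g h | MOr g h => fv1 g ++ fv1 h
  | MEx1 x g => [seq y <- fv1 g | y != x]
  | MEx2 _ g => fv1 g
  end.

Fixpoint fv2 A (f : mso A) : seq nat :=
  match f with
  | MIn _ X => [:: X]
  | MRel _ _ _ | MRoot _ | MEq _ _ => [::]
  | MNot g => fv2 g
  | MAnd g h | MOr g h => fv2 g ++ fv2 h
  | MEx1 _ g => fv2 g
  | MEx2 X g => [seq Y <- fv2 g | Y != X]
  end.

Definition is_sentence A (f : mso A) : Prop := fv1 f = [::] /\ fv2 f = [::].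

Fixpoint over_Rtree A (ar : A -> nat) (tau : {fset nat}) (f : mso A) : Prop :=
  match f with
  | MRel b _ ys => in_Bparse ar tau b /\ size ys = plab_arity b
  | MRoot _ | MEq _ _ | MIn _ _ => True
  | MNot g | MEx1 _ g | MEx2 _ g => over_Rtree ar tau g
  | MAnd g h | MOr g h => over_Rtree ar tau g /\ over_Rtree ar tau h
  end.

Definition upd {T} (e : nat -> T) (x : nat) (v : T) : nat -> T :=
  fun y => if y == x then v else e y.

Fixpoint sat A (M : rstruct A) (e1 : nat -> nat) (e2 : nat -> nat -> Prop)
  (f : mso A) : Prop :=
  match f with
  | MRel b x ys => urel M b (e1 x :: [seq e1 y | y <- ys])
  | MRoot x => uroot M (e1 x)
  | MEq x y => e1 x = e1 y
  | MIn x X => e2 X (e1 x)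
  | MNot g => ~ sat M e1 e2 g
  | MAnd g h => sat M e1 e2 g /\ sat M e1 e2 h
  | MOr g h => sat M e1 e2 g \/ sat M e1 e2 h
  | MEx1 x g => exists u, u < usize M /\ sat M (upd e1 x u) e2 g
  | MEx2 X g => exists P : nat -> Prop,
      (forall u, P u -> u < usize M) /\ sat M e1 (upd e2 X P) g
  end.

(* M |= phi for a sentence phi (environments are irrelevant) *)
Definition models A (M : rstruct A) (f : mso A) : Prop :=
  sat M (fun _ => 0) (fun _ _ => False) f.

Definition const_op A (c : plab A) : hgraph A :=
  match c with
  | PZero sigma => hr_zero A sigma
  | PEdge a ss => hr_edge a ss
  | _ => HG [::] [::] [::] (* not a unary label: never occurs in T(B) *)
  end.

Definition unary_op A (b : plab A) (g : hgraph A) : hgraph A :=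
  match b with
  | PRestrict sigma => hr_restrict sigma g
  | PRename alpha alphai => hr_rename alpha alphai g
  | _ => g (* not a binary label: never occurs in T(B) *)
  end.

Fixpoint hr_value A (t : tterm A) : hgraph A :=
  match t with
  | TLeaf c => const_op c
  | TApp b t' => unary_op b (hr_value t')
  | TPar t1 t2 => hr_par (hr_value t1) (hr_value t2)
  end.

From mathcomp Require Import all_boot finmap zify.
From Stdlib Require Import Classical FunctionalExtensionality.
From Stdlib Require List.

Set Implicit Arguments.
Unset Strict Implicit.
Unset Printing Implicit Defensive.

(* A source label q of val(T) is created at a leaf 0_sigma (q in sigma) or
   a_(s_1,...,s_k) (q among the s_i), and travels up towards the root, being
   dropped by restrict_sigma unless q is in sigma, replaced by alpha^-1 q by
   rename_alpha, and kept by ||.  Read top-down, this is a tree automaton whose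
   states are source labels: s is a source of val(T) iff from the configuration
   (root, s) one reaches, going down a restrict_sigma-edge in a state q in sigma
   or down a rename_alpha-edge with q turned into alpha q, a leaf creating the
   current state.  Starting from s only the finitely many states {s} u tau occur,
   so the sentence can say "every family (X_q) of node sets that contains the
   root in X_s and is closed under the transitions contains a creating leaf";
   this holds iff the least such family, the reachable configurations, does.
   The sentence needs one clause per label of B^tau_parse, and these are
   finitely many because a renaming fixing everything outside tau is
   determined by its values on tau. *)

Lemma InP (T : eqType) (x : T) (s : seq T) : reflect (List.In x s) (x \in s).
Proof.
apply: (iffP idP); elim: s => //= y s IH; rewrite inE.
- by case/orP=> [/eqP ->|/IH]; [left | right].
- by case=> [->|/IH ->]; rewrite ?eqxx ?orbT.
Qed.

Lemma In_nth T (d : T) (x : T) (s : seq T) :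
  List.In x s <-> exists2 i, i < size s & nth d s i = x.
Proof.
elim: s => [|y s IH] /=; first by split=> // [[]].
split.
- case=> [<-|/IH [i lt_i <-]]; first by exists 0.
  by exists i.+1.
- case=> [[|i]] /= lt_i x_i; first by left.
  by right; apply/IH; exists i.
Qed.

Lemma In_allpairs S T R (f : S -> T -> R) (s : seq S) (t : S -> seq T) x y :
  List.In x s -> List.In y (t x) -> List.In (f x y) [seq f x y | x <- s, y <- t x].
Proof.
elim: s => //= z s IH [<-|s_x] t_y; apply/List.in_app_iff; first by left; apply: List.in_map.
by right; apply: IH.
Qed.

Lemma filter_Prop T (P : T -> Prop) (l : seq T) :
  exists l', forall x, List.In x l' <-> P x /\ List.In x l.
Proof.
elim: l => [|y l [l' l'P]]; first by exists [::] => x; split=> [|[]].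
have [Py|nPy] := classic (P y).
  by exists (y :: l') => x /=; rewrite l'P; split=> [[<-|]|[Px [<-|]]]; tauto.
by exists l' => x /=; rewrite l'P; split=> [|[Px [E_y|]]]; [tauto | subst | tauto].
Qed.

Fixpoint words_over T (l : seq T) (k : nat) : seq (seq T) :=
  if k is k'.+1 then [seq x :: w | x <- l, w <- words_over l k'] else [:: [::]].

Lemma mem_words_over (T : eqType) (l : seq T) k w :
  (w \in words_over l k) = (size w == k) && all (mem l) w.
Proof.
elim: k w => [|k IH] [|x w] //=; first by apply/negbTE/negP => /allpairsP [[y v] [_ _]].
rewrite eqSS andbCA -IH.
by apply/allpairsP/andP => [[[y v] /= [y_in v_in [-> ->]]] // | [x_in w_in]]; exists (x, w).
Qed.

Lemma mem_fixout_perm (tau : {fset nat}) (alpha alphai : nat -> nat) x :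
  cancel alpha alphai -> (forall y, y \notin tau -> alpha y = y) ->
  x \in tau -> alpha x \in tau.
Proof.
move=> alphaK fix_alpha x_in; apply: contraT => alpha_x.
by move: x_in; rewrite -[x]alphaK -{1}(fix_alpha _ alpha_x) alphaK (negbTE alpha_x).
Qed.

Definition fixout_perm (tau : {fset nat}) (m : seq nat) (x : nat) : nat :=
  if x \in tau then nth x m (index x (enum_fset tau)) else x.

Lemma fixout_permE (tau : {fset nat}) (alpha : nat -> nat) :
  (forall x, x \notin tau -> alpha x = x) ->
  fixout_perm tau [seq alpha x | x <- enum_fset tau] = alpha.
Proof.
move=> fix_alpha; apply: functional_extensionality => x; rewrite /fixout_perm.
case: ifP => [x_in|/negbT /fix_alpha //].
by rewrite (nth_map x) ?index_mem // nth_index.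
Qed.

Section LabelSemantics.

Variable A : Type.

Definition label_step (b : plab A) (q : nat) : option nat :=
  match b with
  | PRestrict sigma => if q \in sigma then Some q else None
  | PRename alpha _ => Some (alpha q)
  | _ => None
  end.

Definition leaf_accepts (c : plab A) (q : nat) : bool :=
  match c with
  | PZero sigma => q \in sigma
  | PEdge _ ss => q \in ss
  | _ => false
  end.

Lemma mem_sort_const (c : plab A) q : (q \in sort_of (const_op c)) = leaf_accepts c q.
Proof.
by case: c => //= [sigma|a ss]; rewrite /sort_of [map _ _]unzip1_zip ?size_iota ?mem_undup.
Qed.

Lemma mem_sort_restrict sigma (g : hgraph A) q :
  (q \in sort_of (hr_restrict sigma g)) = (q \in sort_of g) && (q \in sigma).
Proof. by rewrite /sort_of /= -(filter_map fst (mem sigma)) mem_filter andbC. Qed.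

Lemma mem_sort_rename alpha alphai (g : hgraph A) q :
  cancel alpha alphai -> cancel alphai alpha ->
  (q \in sort_of (hr_rename alpha alphai g)) = (alpha q \in sort_of g).
Proof.
move=> alphaK alphaiK.
by rewrite /sort_of -(mem_map (can_inj alphaiK) _ (alpha q)) alphaK -!map_comp.
Qed.

Lemma mem_sort_par (g h : hgraph A) q :
  (q \in sort_of (hr_par g h)) = (q \in sort_of g) || (q \in sort_of h).
Proof.
rewrite /sort_of /= map_cat mem_cat -map_comp.
rewrite -(filter_map fst (predC (mem [seq p.1 | p <- hS g]))) mem_filter.
by rewrite /= orb_andr orbN.
Qed.

End LabelSemantics.

Lemma label_step_states A (ar : A -> nat) tau s (b : plab A) q q' :
  in_Bparse ar tau b -> q \in s :: enum_fset tau -> label_step b q = Some q' ->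
  q' \in s :: enum_fset tau.
Proof.
case: b => //= [sigma|alpha alphai].
  by move=> _ q_in; case: ifP => // _ [<-].
case=> alphaK [_ fix_alpha] q_in [<-]; case: (boolP (q \in tau)) => q_tau.
  by rewrite inE (mem_fixout_perm alphaK fix_alpha q_tau) orbT.
by rewrite fix_alpha.
Qed.

(* Labels contain functions, hence have no decidable equality: membership in
   edge lists is [List.In]. *)
Section Automaton.

Variable A : Type.
Local Notation edges := (seq (plab A * seq nat)).

Inductive reachable (E : edges) (x : nat * nat) : nat * nat -> Prop :=
| reachable_refl : reachable E x x
| reachable_step b u w q q' : reachable E x (u, q) -> List.In (b, [:: u; w]) E ->
    label_step b q = Some q' -> reachable E x (w, q').

Definition accepted (E : edges) (v q : nat) : Prop :=
  exists w q', reachable E (v, q) (w, q') /\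
    exists2 c, List.In (c, [:: w]) E & leaf_accepts c q'.

Definition map_edges (f : nat -> nat) (E : edges) : edges :=
  [seq (e.1, [seq f v | v <- e.2]) | e <- E].

Definition tree_shaped (n r : nat) (E : edges) : Prop :=
  [/\ r < n, forall b l v, List.In (b, l) E -> v \in l -> v < n &
      forall b u w, List.In (b, [:: u; w]) E -> w != r].

Lemma reachable_trans E x y z : reachable E x y -> reachable E y z -> reachable E x z.
Proof. by move=> rxy; elim=> // b u w q q' _ rxu e_in; apply: reachable_step rxu e_in. Qed.

Lemma reachable_sub E E' x y :
  (forall e, List.In e E -> List.In e E') -> reachable E x y -> reachable E' x y.
Proof.
move=> sub_E; elim=> [|b u w q q' _ rxu e_in]; first exact: reachable_refl.
exact/(reachable_step rxu)/sub_E.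
Qed.

Lemma In_map_edges f E b l :
  List.In (b, l) (map_edges f E) <-> exists2 l0, List.In (b, l0) E & l = map f l0.
Proof.
rewrite List.in_map_iff; split=> [[[b0 l0] [[<- <-] e_in]] | [l0 e_in ->]].
  by exists l0.
by exists (b, l0).
Qed.

Lemma reachable_map_edges f E v q y :
  reachable E (v, q) y -> reachable (map_edges f E) (f v, q) (f y.1, y.2).
Proof.
elim=> [|b u w q0 q' _ rxu e_in]; first exact: reachable_refl.
by apply: (reachable_step rxu); apply/In_map_edges; exists [:: u; w].
Qed.

Lemma reachable_lt n r E q y : tree_shaped n r E -> reachable E (r, q) y -> y.1 < n.
Proof.
case=> lt_r lt_n _; elim=> // b u w q0 q' _ _ e_in _.
by apply: lt_n e_in _; rewrite !inE eqxx orbT.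
Qed.

Lemma reachable_root n r E q q' : tree_shaped n r E -> reachable E (r, q) (r, q') -> q' = q.
Proof.
case=> _ _ no_in; move Ey: (r, q') => y ry; elim: ry q' Ey => [|b u w q0 q1 _ _ e_in _] q'.
  by case=> ->.
by case=> E_w _; move: (no_in _ _ _ e_in); rewrite E_w eqxx.
Qed.

Lemma accepted_leaf (c : plab A) q : accepted [:: (c, [:: 0])] 0 q <-> leaf_accepts c q.
Proof.
have stay y : reachable [:: (c, [:: 0])] (0, q) y -> y = (0, q).
  by elim=> // b u w q0 q' _ _ [|[]].
split=> [[w [q' [/stay [-> ->] [c' [[<-]|[]] //]]]] | acc_c].
by exists 0, q; split; [exact: reachable_refl | exists c; first left].
Qed.

Lemma accepted_append n r E b q : tree_shaped n r E ->
  accepted (rcons E (b, [:: n; r])) n q <->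
  exists2 q', label_step b q = Some q' & accepted E r q'.
Proof.
move=> shE; have [_ lt_n _] := shE.
have not_from_n b0 l : ~ List.In (b0, n :: l) E.
  by move/lt_n/(_ (mem_head _ _)); rewrite ltnn.
have In_new e : List.In e (rcons E (b, [:: n; r])) <-> List.In e E \/ e = (b, [:: n; r]).
  by rewrite -cats1 List.in_app_iff /=; intuition.
have reach_new y : reachable (rcons E (b, [:: n; r])) (n, q) y ->
    y = (n, q) \/ exists2 q', label_step b q = Some q' & reachable E (r, q') y.
  elim=> [|b0 u w q0 q1 _ IH /In_new [e_in|[-> E_u ->]] step]; first by left.
  - case: IH => [[E_u _]|[q' step' r_u]]; first by rewrite E_u in e_in; case: (not_from_n _ _ e_in).
    by right; exists q'; last exact: reachable_step r_u e_in step.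
  - rewrite E_u in IH; case: IH => [[E_q]|[q' _ r_n]].
      by rewrite -E_q; right; exists q1; last exact: reachable_refl.
    by have := reachable_lt shE r_n; rewrite ltnn.
split.
- case=> w [q' [/reach_new r_w [c /In_new [c_in|//] acc_c]]].
  case: r_w => [[E_w _]|[q'' step r_w]]; first by rewrite E_w in c_in; case: (not_from_n _ _ c_in).
  by exists q'' => //; exists w, q'; split=> //; exists c.
- case=> q' step [w [q'' [r_w [c c_in acc_c]]]].
  exists w, q''; split; last by exists c; first by apply/In_new; left.
  apply: reachable_trans (reachable_step (reachable_refl _ _) _ step) _.
    by apply/In_new; right.
  by apply: reachable_sub r_w => e e_in; apply/In_new; left.
Qed.

Section Glue.

Variables (n1 r1 n2 r2 : nat) (E1 E2 : edges) (f : nat -> nat).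
Hypotheses (shE1 : tree_shaped n1 r1 E1) (shE2 : tree_shaped n2 r2 E2).
Hypotheses (f_root : f r2 = r1) (f_inj : injective f)
  (f_low : forall v, f v < n1 -> v = r2).

Lemma reachable_E2_low v q q' :
  reachable E2 (r2, q) (v, q') -> f v < n1 -> f v = r1 /\ q' = q.
Proof. by move=> rv /f_low E_v; subst v; split=> //; apply: reachable_root shE2 rv. Qed.

Lemma reachable_E1_image u v q q' :
  reachable E1 (r1, q) (u, q') -> u = f v -> v = r2 /\ u = r1 /\ q' = q.
Proof.
move=> ru E_u; have lt_u := reachable_lt shE1 ru.
have E_v : v = r2 by apply: f_low; rewrite -E_u.
by rewrite E_u E_v f_root in ru *; do !split=> //; apply: reachable_root shE1 ru.
Qed.

Lemma reachable_glue q y : reachable (E1 ++ map_edges f E2) (r1, q) y ->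
  reachable E1 (r1, q) y \/ exists2 v, reachable E2 (r2, q) (v, y.2) & y.1 = f v.
Proof.
have [_ lt_n1 _] := shE1.
elim=> [|b u w q0 q' _ IH /List.in_app_iff [e_in|/In_map_edges [l e_in E_l]] step].
- by left; apply: reachable_refl.
- case: IH => [r_u|[v /= r_v E_u]]; first by left; apply: reachable_step r_u e_in step.
  have lt_u : f v < n1 by rewrite -E_u; apply: lt_n1 e_in (mem_head _ _).
  have [E_fv E_q] := reachable_E2_low r_v lt_u.
  rewrite E_u E_fv E_q in e_in step.
  by left; apply: reachable_step (reachable_refl _ _) e_in step.
- case: l e_in E_l => [|u0 [|w0 []]] //= e_in [E_u ->].
  case: IH => [r_u|[v /= r_v E_v]].
  + have [E_u0 [_ E_q]] := reachable_E1_image r_u E_u.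
    rewrite E_u0 E_q in e_in step.
    by right; exists w0 => //; apply: reachable_step (reachable_refl _ _) e_in step.
  + have E_u0 : v = u0 by apply: f_inj; rewrite -E_u -E_v.
    by rewrite E_u0 in r_v; right; exists w0 => //; apply: reachable_step r_v e_in step.
Qed.

Lemma accepted_glue q :
  accepted (E1 ++ map_edges f E2) r1 q <-> accepted E1 r1 q \/ accepted E2 r2 q.
Proof.
have [_ lt_n1 _] := shE1.
have In1 e : List.In e E1 -> List.In e (E1 ++ map_edges f E2).
  by move=> e_in; apply/List.in_app_iff; left.
have In2 e : List.In e (map_edges f E2) -> List.In e (E1 ++ map_edges f E2).
  by move=> e_in; apply/List.in_app_iff; right.
split.
- case=> w [q' [/reachable_glue r_w [c /List.in_app_iff c_in acc_c]]].
  case: r_w c_in => [r_w|[v /= r_v E_w]] [c_in|/In_map_edges [l c_in E_l]].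
  + by left; exists w, q'; split=> //; exists c.
  + case: l c_in E_l => [|w0 []] //= c_in [E_w].
    have [E_w0 [_ E_q]] := reachable_E1_image r_w E_w.
    rewrite E_w0 E_q in c_in acc_c.
    by right; exists r2, q; split; [apply: reachable_refl | exists c].
  + have lt_w : f v < n1 by rewrite -E_w; apply: lt_n1 c_in (mem_head _ _).
    have [E_fv E_q] := reachable_E2_low r_v lt_w.
    rewrite E_w E_fv in c_in; rewrite E_q in acc_c.
    by left; exists r1, q; split; [apply: reachable_refl | exists c].
  + case: l c_in E_l => [|w0 []] //= c_in [E_w0].
    have E_v : v = w0 by apply: f_inj; rewrite -E_w -E_w0.
    by right; exists v, q'; split=> //; exists c; rewrite ?E_v.
- case=> [[w [q' [r_w [c c_in acc_c]]]] | [w [q' [r_w [c c_in acc_c]]]]].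
  + by exists w, q'; split; [apply: reachable_sub r_w | exists c; first apply: In1].
  + exists (f w), q'; split.
      by rewrite -f_root; apply: reachable_sub (reachable_map_edges f r_w).
    by exists c => //; apply/In2/In_map_edges; exists [:: w].
Qed.

End Glue.
End Automaton.

Definition glue_map (n1 r1 r2 v : nat) : nat :=
  if v == r2 then r1 else if v < r2 then n1 + v else n1 + v - 1.

Section GlueMap.

Variables n1 r1 r2 : nat.
Local Notation f := (glue_map n1 r1 r2).

Lemma glue_map_root : f r2 = r1.
Proof. by rewrite /glue_map eqxx. Qed.

Lemma glue_map_ge v : v != r2 -> n1 <= f v.
Proof. by move=> ne_v; rewrite /glue_map (negbTE ne_v); case: ltnP; lia. Qed.

Lemma glue_map_low v : f v < n1 -> v = r2.
Proof. by case: (v =P r2) => // /eqP /glue_map_ge; lia. Qed.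

Lemma glue_map_lt n2 v : r1 < n1 -> r2 < n2 -> v < n2 -> f v < n1 + n2 - 1.
Proof. by rewrite /glue_map => *; case: eqP; case: (ltnP v r2); lia. Qed.

Lemma glue_map_inj : r1 < n1 -> injective f.
Proof.
rewrite /glue_map => lt_r1 u v.
by case: (u =P r2); case: (v =P r2); case: (ltnP u r2); case: (ltnP v r2); lia.
Qed.

End GlueMap.

Section Build.

Variable A : Type.

Lemma build_app (b : plab A) t n r E :
  build t = (n, r, E) -> build (TApp b t) = (n.+1, n, rcons E (b, [:: n; r])).
Proof. by move=> /= ->. Qed.

Lemma build_par (t1 t2 : tterm A) n1 r1 E1 n2 r2 E2 :
  build t1 = (n1, r1, E1) -> build t2 = (n2, r2, E2) ->
  build (TPar t1 t2) = (n1 + n2 - 1, r1, E1 ++ map_edges (glue_map n1 r1 r2) E2).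
Proof. by move=> /= -> ->. Qed.

Lemma build_tree_shaped (t : tterm A) n r E : build t = (n, r, E) -> tree_shaped n r E.
Proof.
elim: t n r E => [c|b t IH|t1 IH1 t2 IH2] n r E.
- case=> <- <- <-; split=> // [b l v [[_ <-]|[]]|b u w [|[]]] //.
  by rewrite inE => /eqP ->.
- case B: (build t) => [[n' r'] E']; rewrite (build_app b B) => -[<- <- <-].
  have [lt_r lt_n no_r] := IH _ _ _ B.
  split=> // [b0 l v|b0 u w]; rewrite -cats1 List.in_app_iff => -[e_in|[|[]]] //.
  + by move=> /(lt_n _ _ _ e_in) /ltnW.
  + by case=> _ <-; rewrite !inE => /orP [] /eqP ->; rewrite ltnS // ltnW.
  + by rewrite neq_ltn (lt_n _ _ _ e_in) // !inE eqxx orbT.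
  + by case=> _ _ <-; rewrite neq_ltn lt_r.
- case B1: (build t1) => [[n1 r1] E1]; case B2: (build t2) => [[n2 r2] E2].
  rewrite (build_par B1 B2) => -[<- <- <-].
  have [lt_r1 lt_n1 no_r1] := IH1 _ _ _ B1; have [lt_r2 lt_n2 no_r2] := IH2 _ _ _ B2.
  split=> [|b l v|b u w]; first lia.
  + case/List.in_app_iff => [e_in /(lt_n1 _ _ _ e_in)|]; first lia.
    case/In_map_edges => l0 e_in -> /mapP [v0 v0_in ->].
    by apply: glue_map_lt => //; apply: lt_n2 e_in v0_in.
  + case/List.in_app_iff => [/no_r1 //|/In_map_edges [l0 e_in E_l]].
    case: l0 e_in E_l => [|u0 [|w0 []]] //= e_in [_ ->].
    by rewrite neq_ltn (leq_trans lt_r1) ?orbT // glue_map_ge // (no_r2 _ _ _ e_in).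
Qed.

Variables (ar : A -> nat) (tau : {fset nat}).

Lemma build_labels (t : tterm A) n r E : build t = (n, r, E) -> in_TB ar tau t ->
  forall b l, List.In (b, l) E -> in_Bparse ar tau b.
Proof.
elim: t n r E => [c|b t IH|t1 IH1 t2 IH2] n r E.
- by case=> _ _ <- [_ Bc] b l [[<- _]|[]].
- case B: (build t) => [[n' r'] E']; rewrite (build_app b B) => -[_ _ <-] [_ [Bb Bt]] b0 l.
  by rewrite -cats1 List.in_app_iff => -[/(IH _ _ _ B Bt)|[[<- _]|[]]].
- case B1: (build t1) => [[n1 r1] E1]; case B2: (build t2) => [[n2 r2] E2].
  rewrite (build_par B1 B2) => -[_ _ <-] [Bt1 Bt2] b l.
  by case/List.in_app_iff => [/(IH1 _ _ _ B1 Bt1)|/In_map_edges [l0 /(IH2 _ _ _ B2 Bt2)]].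
Qed.

Lemma has_source_accepted (t : tterm A) n r E : build t = (n, r, E) -> in_TB ar tau t ->
  forall q, has_source (hr_value t) q <-> accepted E r q.
Proof.
rewrite /has_source; elim: t n r E => [c|b t IH|t1 IH1 t2 IH2] n r E.
- by case=> _ <- <- _ q; rewrite mem_sort_const accepted_leaf.
- case B: (build t) => [[n' r'] E']; rewrite (build_app b B) => -[_ <- <-] [binary_b [Bb Bt]] q.
  rewrite accepted_append; last exact: build_tree_shaped B.
  have IHt := IH _ _ _ B Bt.
  case: b binary_b Bb => // [sigma|alpha alphai] _ => [_|[alphaK [alphaiK _]]].
  + rewrite [hr_value _]/= (mem_sort_restrict sigma) /=.
    case: ifP => q_in; rewrite ?andbT ?andbF; last by split=> // [[]].
    by apply: iff_trans (IHt q) _; split=> [|[q' [->]]] //; exists q.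
  + rewrite [hr_value _]/= (mem_sort_rename _ _ alphaK alphaiK) /=.
    by apply: iff_trans (IHt _) _; split=> [|[q' [->]]] //; exists (alpha q).
- case B1: (build t1) => [[n1 r1] E1]; case B2: (build t2) => [[n2 r2] E2].
  rewrite (build_par B1 B2) => -[_ <- <-] [Bt1 Bt2] q.
  have sh1 := build_tree_shaped B1; have [lt_r1 _ _] := sh1.
  rewrite [hr_value _]/= mem_sort_par (accepted_glue sh1 (build_tree_shaped B2)).
  - by rewrite -(IH1 _ _ _ B1 Bt1) -(IH2 _ _ _ B2 Bt2); split=> /orP.
  - exact: glue_map_root.
  - exact: glue_map_inj.
  - exact: glue_map_low.
Qed.

End Build.

Section Formulas.

Variable A : Type.
Implicit Types (M : rstruct A).

Definition mso_false : mso A := MEx1 0 (MNot (MEq A 0 0)).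
Definition mso_true : mso A := MNot mso_false.

Fixpoint mso_all T (l : seq T) (F : T -> mso A) : mso A :=
  if l is x :: l' then MAnd (F x) (mso_all l' F) else mso_true.

Fixpoint mso_any T (l : seq T) (F : T -> mso A) : mso A :=
  if l is x :: l' then MOr (F x) (mso_any l' F) else mso_false.

Definition mso_exists_sets (Xs : seq nat) (f : mso A) : mso A := foldr (@MEx2 A) f Xs.

Lemma sat_mso_false M e1 e2 : ~ sat M e1 e2 mso_false.
Proof. by case=> u [_ /=]; apply. Qed.

Lemma sat_mso_true M e1 e2 : sat M e1 e2 mso_true.
Proof. exact: sat_mso_false. Qed.

Lemma sat_mso_all M e1 e2 T (l : seq T) F :
  sat M e1 e2 (mso_all l F) <-> forall x, List.In x l -> sat M e1 e2 (F x).
Proof.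
elim: l => [|y l IH] /=; first by split=> // _; apply: sat_mso_true.
by rewrite IH; split=> [[Fy Fl] x [<-|/Fl]|Fl] //; split=> [|x l_x]; apply: Fl; [left|right].
Qed.

Lemma sat_mso_any M e1 e2 T (l : seq T) F :
  sat M e1 e2 (mso_any l F) <-> exists2 x, List.In x l & sat M e1 e2 (F x).
Proof.
elim: l => [|y l IH] /=; first by split=> [/sat_mso_false|[]].
rewrite IH; split=> [[Fy|[x l_x Fx]]|[x [<-|l_x] Fx]].
- by exists y; first left.
- by exists x; first right.
- by left.
- by right; exists x.
Qed.

Lemma sat_mso_exists_sets M e1 e2 Xs f :
  sat M e1 e2 (mso_exists_sets Xs f) <->
  exists e2', [/\ forall X, X \notin Xs -> e2' X = e2 X,
                  forall X u, X \in Xs -> e2' X u -> u < usize M &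
                  sat M e1 e2' f].
Proof.
elim: Xs e2 => [|X Xs IH] e2 /=.
  split=> [f_e2|[e2' [e2'E _ f_e2']]]; first by exists e2.
  by have -> : e2 = e2' by apply: functional_extensionality => X; rewrite e2'E.
split=> [[P [P_lt /IH [e2' [e2'E e2'_lt f_e2']]]]|[e2' [e2'E e2'_lt f_e2']]].
- exists e2'; split=> // [Y|Y u].
    by rewrite inE negb_or => /andP [/negbTE Y_X Y_Xs]; rewrite e2'E // /upd Y_X.
  rewrite inE; case: (boolP (Y \in Xs)) => [Y_Xs _|Y_Xs]; first exact: e2'_lt.
  by rewrite orbF => /eqP E_Y; subst Y; rewrite e2'E // /upd eqxx; apply: P_lt.
- exists (e2' X); split=> [u|]; first by apply: e2'_lt; rewrite mem_head.
  apply/IH; exists e2'; split=> [Y Y_Xs|Y u Y_Xs|] //; last by apply: e2'_lt; rewrite inE Y_Xs orbT.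
  rewrite /upd; case: eqP => [->//|/eqP Y_X].
  by apply: e2'E; rewrite inE negb_or Y_X.
Qed.

Lemma fv1_mso_all T (l : seq T) F :
  (forall x, List.In x l -> fv1 (F x) = [::]) -> fv1 (mso_all l F) = [::].
Proof.
elim: l => //= y l IH F0; rewrite F0 /=; last by left.
by apply: IH => x l_x; apply: F0; right.
Qed.

Lemma fv1_mso_any T (l : seq T) F :
  (forall x, List.In x l -> fv1 (F x) = [::]) -> fv1 (mso_any l F) = [::].
Proof.
elim: l => //= y l IH F0; rewrite F0 /=; last by left.
by apply: IH => x l_x; apply: F0; right.
Qed.

Lemma fv2_mso_all T (l : seq T) F (Xs : seq nat) :
  (forall x, List.In x l -> {subset fv2 (F x) <= Xs}) -> {subset fv2 (mso_all l F) <= Xs}.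
Proof.
elim: l => //= y l IH F_Xs X; rewrite mem_cat => /orP [].
  by apply: F_Xs; left.
by apply: IH => x l_x; apply: F_Xs; right.
Qed.

Lemma fv2_mso_any T (l : seq T) F (Xs : seq nat) :
  (forall x, List.In x l -> {subset fv2 (F x) <= Xs}) -> {subset fv2 (mso_any l F) <= Xs}.
Proof.
elim: l => //= y l IH F_Xs X; rewrite mem_cat => /orP [].
  by apply: F_Xs; left.
by apply: IH => x l_x; apply: F_Xs; right.
Qed.

Lemma fv1_mso_exists_sets Xs f : fv1 (mso_exists_sets Xs f) = fv1 f.
Proof. by elim: Xs => //= X Xs ->. Qed.

Lemma fv2_mso_exists_sets Xs f :
  fv2 (mso_exists_sets Xs f) = [seq X <- fv2 f | X \notin Xs].
Proof.
elim: Xs => /= [|X Xs ->]; first by rewrite filter_predT.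
by rewrite -filter_predI; apply: eq_filter => Y /=; rewrite inE negb_or andbC.
Qed.

Variables (ar : A -> nat) (tau : {fset nat}).

Lemma over_mso_all T (l : seq T) F :
  over_Rtree ar tau (mso_all l F) <-> forall x, List.In x l -> over_Rtree ar tau (F x).
Proof.
elim: l => [|y l IH] /=; first by [].
by rewrite IH; split=> [[Fy Fl] x [<-|/Fl]|Fl] //; split=> [|x l_x]; apply: Fl; [left|right].
Qed.

Lemma over_mso_any T (l : seq T) F :
  over_Rtree ar tau (mso_any l F) <-> forall x, List.In x l -> over_Rtree ar tau (F x).
Proof.
elim: l => [|y l IH] /=; first by [].
by rewrite IH; split=> [[Fy Fl] x [<-|/Fl]|Fl] //; split=> [|x l_x]; apply: Fl; [left|right].
Qed.

Lemma over_mso_exists_sets Xs f :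
  over_Rtree ar tau (mso_exists_sets Xs f) <-> over_Rtree ar tau f.
Proof. by elim: Xs. Qed.

End Formulas.

Section SourceSentence.

Variable A : Type.
Implicit Types (M : rstruct A) (b c : plab A).

Definition mso_edge_closed b (X Y : nat) : mso A :=
  MNot (MEx1 0 (MEx1 1 (MEx1 2
    (MAnd (MRel b 0 [:: 1; 2]) (MAnd (MIn A 1 X) (MNot (MIn A 2 Y))))))).

Definition mso_leaf_in c (X : nat) : mso A :=
  MEx1 0 (MEx1 1 (MAnd (MRel c 0 [:: 1]) (MIn A 1 X))).

Definition mso_root_in (X : nat) : mso A := MEx1 0 (MAnd (MRoot A 0) (MIn A 0 X)).

(* The test [q' \in Q] never fails for labels of B^tau_parse (see
   [label_step_states]); it only keeps the set variables within [Q]. *)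
Definition step_clause (Q : seq nat) b q : mso A :=
  if label_step b q is Some q' then
    if q' \in Q then mso_edge_closed b q q' else mso_true A
  else mso_true A.

Definition accept_clause c q : mso A :=
  if leaf_accepts c q then mso_leaf_in c q else mso_false A.

(* The set variable X_q of the informal argument is the variable q itself. *)
Definition mso_refutation (Lb : seq (plab A)) (Q : seq nat) (s : nat) : mso A :=
  MAnd (mso_all Lb (fun b => mso_all Q (step_clause Q b)))
    (MAnd (mso_root_in s) (MNot (mso_any Lb (fun c => mso_any Q (accept_clause c))))).

Definition source_sentence (Lb : seq (plab A)) (Q : seq nat) (s : nat) : mso A :=
  MNot (mso_exists_sets Q (mso_refutation Lb Q s)).

Lemma sat_mso_edge_closed M e1 e2 b X Y :
  sat M e1 e2 (mso_edge_closed b X Y) <->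
  forall x y z, x < usize M -> y < usize M -> z < usize M ->
    urel M b [:: x; y; z] -> e2 X y -> e2 Y z.
Proof.
rewrite /= /upd /=; split=> [no_edge x y z x_lt y_lt z_lt xyz Xy|closed].
  by apply: NNPP => Yz; apply: no_edge; exists x; split=> //; exists y; split=> //; exists z.
by case=> x [x_lt [y [y_lt [z [z_lt [xyz [Xy]]]]]]]; apply; apply: closed xyz Xy.
Qed.

Lemma sat_mso_leaf_in M e1 e2 c X :
  sat M e1 e2 (mso_leaf_in c X) <->
  exists x y, [/\ x < usize M, y < usize M, urel M c [:: x; y] & e2 X y].
Proof.
rewrite /= /upd /=; split=> [[x [x_lt [y [y_lt [xy Xy]]]]]|[x [y [x_lt y_lt xy Xy]]]].
  by exists x, y.
by exists x; split=> //; exists y.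
Qed.

Lemma sat_mso_root_in M e1 e2 X :
  sat M e1 e2 (mso_root_in X) <-> exists x, [/\ x < usize M, uroot M x & e2 X x].
Proof. by rewrite /= /upd /=; split=> [[x [? []]]|[x []]]; exists x. Qed.

Lemma source_sentence_closed Lb Q s : s \in Q -> is_sentence (source_sentence Lb Q s).
Proof.
move=> s_in; split.
  rewrite /= fv1_mso_exists_sets /= fv1_mso_all ?fv1_mso_any // => [c _|b _].
    by apply: fv1_mso_any => q _; rewrite /accept_clause; case: ifP.
  by apply: fv1_mso_all => q _; rewrite /step_clause; case: label_step => // q'; case: ifP.
rewrite /= fv2_mso_exists_sets (eq_in_filter (a2 := pred0)) ?filter_pred0 // => X.
rewrite /= mem_cat inE => X_in; apply: negbF; case/or3P: X_in => [|/eqP -> //|].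
- apply: fv2_mso_all => b _; apply: fv2_mso_all => q /InP q_in Y.
  rewrite /step_clause; case: label_step => // q'; case: ifP => //= q'_in.
  by rewrite !inE => /orP [] /eqP ->.
- apply: fv2_mso_any => c _; apply: fv2_mso_any => q /InP q_in Y.
  by rewrite /accept_clause; case: ifP => //= _; rewrite inE => /eqP ->.
Qed.

Lemma source_sentence_over ar tau Lb Q s :
  (forall b, List.In b Lb -> in_Bparse ar tau b) ->
  over_Rtree ar tau (source_sentence Lb Q s).
Proof.
move=> Lb_B; rewrite /= over_mso_exists_sets /=; split; last split=> //.
  apply/over_mso_all => b b_in; apply/over_mso_all => q _.
  rewrite /step_clause; case step: label_step => [q'|//]; case: ifP => //= _.
  by split=> //; split; [apply: Lb_B | case: b step {b_in}].
apply/over_mso_any => c c_in; apply/over_mso_any => q _.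
rewrite /accept_clause; case acc: leaf_accepts => //=.
by split=> //; split; [apply: Lb_B | case: c acc {c_in}].
Qed.

End SourceSentence.

Section EdgeStructure.

Variable A : Type.
Local Notation edges := (seq (plab A * seq nat)).

Definition edge_rel (n : nat) (E : edges) (b : plab A) (xs : seq nat) : Prop :=
  exists i, [/\ i < size E, (nth (b, [::]) E i).1 = b &
                xs = (n + i) :: (nth (b, [::]) E i).2].

Definition edge_struct (n r : nat) (E : edges) : rstruct A :=
  RS (n + size E) (edge_rel n E) (fun x => x = r).

Lemma enc_build (t : tterm A) n r E : build t = (n, r, E) -> enc t = edge_struct n r E.
Proof. by rewrite /enc => ->. Qed.

Lemma edge_rel_In n E b x l : edge_rel n E b (x :: l) -> List.In (b, l) E.
Proof.
case=> i [lt_i E_b [_ E_l]]; apply/(In_nth (b, [::])); exists i => //.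
by move: E_b E_l; case: nth => b0 l0 /= -> ->.
Qed.

Lemma In_edge_rel n E b l :
  List.In (b, l) E -> exists2 x, x < n + size E & edge_rel n E b (x :: l).
Proof.
case/(In_nth (b, [::])) => i lt_i E_i; exists (n + i); first by rewrite ltn_add2l.
by exists i; rewrite E_i.
Qed.

End EdgeStructure.

Section SourceSentenceCorrect.

Variables (A : Type) (ar : A -> nat) (tau : {fset nat}) (s : nat) (Lb : seq (plab A)).
Hypothesis Lb_complete : forall b, in_Bparse ar tau b -> List.In b Lb.
Variables (n r : nat) (E : seq (plab A * seq nat)).
Hypotheses (shE : tree_shaped n r E)
  (E_labels : forall b l, List.In (b, l) E -> in_Bparse ar tau b).

Local Notation Q := (s :: enum_fset tau).
Local Notation M := (edge_struct n r E).

Let node_lt v : v < n -> v < usize M.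
Proof. by move=> lt_v; apply: leq_trans lt_v (leq_addr _ _). Qed.

Let edge_node_lt b l v : List.In (b, l) E -> v \in l -> v < usize M.
Proof. by case: shE => _ lt_n _ /lt_n lt_l /lt_l /node_lt. Qed.

Definition run_family (e2 : nat -> nat -> Prop) (X v : nat) : Prop :=
  if X \in Q then reachable E (r, s) (v, X) else e2 X v.

Lemma run_family_refutes e1 e2 :
  ~ accepted E r s -> sat M e1 (run_family e2) (mso_refutation Lb Q s).
Proof.
move=> not_acc; split; last split.
- apply/sat_mso_all => b _; apply/sat_mso_all => q /InP q_in.
  rewrite /step_clause; case step: label_step => [q'|]; last exact: sat_mso_true.
  case: ifP => q'_in; last exact: sat_mso_true.
  apply/sat_mso_edge_closed => x y z _ _ _ xyz; rewrite /run_family q_in q'_in => r_y.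
  exact: reachable_step r_y (edge_rel_In xyz) step.
- apply/sat_mso_root_in; exists r; split=> //; first by case: shE => /node_lt.
  by rewrite /run_family mem_head; apply: reachable_refl.
- case/sat_mso_any => c _ /sat_mso_any [q /InP q_in].
  rewrite /accept_clause; case: ifP => [acc_c|_ /sat_mso_false //].
  case/sat_mso_leaf_in => x [y [_ _ xy]]; rewrite /run_family q_in => r_y.
  by apply: not_acc; exists y, q; split=> //; exists c => //; apply: edge_rel_In xy.
Qed.

Lemma refutation_reachable e1 e2 y :
  sat M e1 e2 (mso_refutation Lb Q s) -> reachable E (r, s) y -> y.2 \in Q /\ e2 y.2 y.1.
Proof.
case=> closed [root _]; elim=> [|b u w q q' _ [q_in e2_u] e_in step].
  by split; [apply: mem_head | have [x [_ /= <-]] := (sat_mso_root_in _ _ _ _).1 root].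
have Bb := E_labels e_in; have q'_in := label_step_states Bb q_in step; split=> //=.
have q_In : List.In q Q by apply/InP.
move/sat_mso_all: closed => /(_ b (Lb_complete Bb)) /sat_mso_all /(_ q q_In).
rewrite /step_clause step q'_in => /sat_mso_edge_closed closed.
have [x x_lt xuw] := In_edge_rel n e_in.
by apply: closed xuw e2_u; rewrite // (edge_node_lt e_in) // !inE eqxx ?orbT.
Qed.

Lemma models_source_sentence : models M (source_sentence Lb Q s) <-> accepted E r s.
Proof.
change (~ sat M (fun _ => 0) (fun _ _ => False) (mso_exists_sets Q (mso_refutation Lb Q s))
  <-> accepted E r s).
split=> [no_refutation|acc /sat_mso_exists_sets [e2 [_ _ refutes]]].
- apply: NNPP => not_acc; apply/no_refutation/sat_mso_exists_sets.
  exists (run_family (fun _ _ => False)); split=> [X /negbTE X_Q|X u X_Q|].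
  + by rewrite /run_family X_Q.
  + by rewrite /run_family X_Q => /(reachable_lt shE) /node_lt.
  + exact: run_family_refutes.
- have [w [q [r_w [c c_in acc_c]]]] := acc.
  have [q_in e2_w] := refutation_reachable refutes r_w.
  case: refutes => _ [_]; apply; apply/sat_mso_any; exists c.
    exact/Lb_complete/(E_labels c_in).
  apply/sat_mso_any; exists q; first exact/InP.
  rewrite /accept_clause acc_c; apply/sat_mso_leaf_in.
  have [x x_lt xw] := In_edge_rel n c_in; exists x, w; split=> //.
  by apply: edge_node_lt c_in _; rewrite mem_head.
Qed.

End SourceSentenceCorrect.

Section BparseFinite.

Variables (A : finType) (ar : A -> nat) (tau : {fset nat}).

Definition Bparse_candidates : seq (plab A) :=
  let subsets := enum_fset (fpowerset tau) in
  let images := words_over (enum_fset tau) #|` tau| in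
  [seq PZero A sigma | sigma <- subsets] ++ [seq PRestrict A sigma | sigma <- subsets] ++
  [seq PEdge a ss | a <- enum A, ss <- words_over (enum_fset tau) (ar a)] ++
  [seq PRename A (fixout_perm tau m) (fixout_perm tau m') | m <- images, m' <- images].

Lemma Bparse_candidates_complete b : in_Bparse ar tau b -> List.In b Bparse_candidates.
Proof.
have word_In k w : size w = k -> all (mem tau) w -> List.In w (words_over (enum_fset tau) k).
  by move=> size_w all_w; apply/InP; rewrite mem_words_over size_w eqxx.
rewrite /Bparse_candidates !List.in_app_iff.
case: b => [sigma|a ss|sigma|alpha alphai] /=.
- by rewrite -fpowersetE => /InP sigma_in; left; apply: List.in_map.
- case=> size_ss all_ss; right; right; left.
  by apply: In_allpairs; [apply/InP; rewrite mem_enum | apply: word_In].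
- by rewrite -fpowersetE => /InP sigma_in; right; left; apply: List.in_map.
- case=> alphaK [alphaiK fix_alpha]; right; right; right.
  have fix_alphai x : x \notin tau -> alphai x = x.
    by move=> x_out; rewrite -{1}(fix_alpha x x_out) alphaK.
  rewrite -(fixout_permE fix_alpha) -(fixout_permE fix_alphai).
  by apply: In_allpairs; apply: word_In; rewrite ?size_map //; apply/allP => y /mapP [x x_in ->];
    apply: mem_fixout_perm.
Qed.

Lemma Bparse_finite : exists Lb : seq (plab A), forall b, List.In b Lb <-> in_Bparse ar tau b.
Proof.
have [Lb LbP] := filter_Prop (in_Bparse ar tau) Bparse_candidates.
exists Lb => b; rewrite LbP; split=> [[]//|Bb]; split=> //.
exact: Bparse_candidates_complete.
Qed.

End BparseFinite.

Theorem lemma5p6 (A : finType) (ar : A -> nat) (tau : {fset nat}) (s : nat) :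
  exists phi : mso A,
    is_sentence phi /\ over_Rtree ar tau phi /\
    forall T : tterm A, in_TB ar tau T ->
      (models (enc T) phi <-> has_source (hr_value T) s).
Proof.
have [Lb LbP] := Bparse_finite ar tau.
exists (source_sentence Lb (s :: enum_fset tau) s); split; last split.
- exact/source_sentence_closed/mem_head.
- by apply: source_sentence_over => b /LbP.
- move=> T T_B; case B: (build T) => [[n r] E].
  rewrite (enc_build B) (models_source_sentence _ (fun b => (LbP b).2)).
  + exact: iff_sym (has_source_accepted B T_B s).
  + exact: build_tree_shaped B.
  + exact: build_labels B T_B.
Qed.
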